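(* Let $f_\omega\in\ell_1([0,\omega])$ be defined by $f_\omega(\omega)=1$ and $f_\omega(n)=0$ for $n<\omega$. Then $f_\omega\in d_{1/2}^{\omega}(B_{\ell_1([0,\omega])})$.
   Context: $[0,\omega]$ is the ordinal interval with the order topology, $\ell_1([0,\omega])$ is identified with $C([0,\omega])^*$ with the corresponding weak$^*$-topology. For $x\in C([0,\omega]),t\in\mathbb R$, $H(x,t)=\{h: h(x)>t\}$; a weak$^*$-slice of a weak$^*$-compact $K$ is a nonempty $H(x,t)\cap K$; $d_\varepsilon K$ is $K$ minus the union of all weak$^*$-slices of $K$ of norm diameter $<\varepsilon$; $d_\varepsilon^0K=K$, $d_\varepsilon^{\beta+1}K=d_\varepsilon(d_\varepsilon^\beta K)$, $d_\varepsilon^\beta K=\bigcap_{\mu<\beta}d_\varepsilon^\mu K$ for limit $\beta$. *)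

From Stdlib Require Import Reals.
Open Scope R_scope.

(* [0,omega] = nat ∪ {omega}.  An element of C([0,omega]) is a pair (x, xw)
   with x : nat -> R, xw = x(omega), continuity at omega meaning Un_cv x xw.
   An element h of ell_1([0,omega]) = C([0,omega])^* is a pair (a, b) with
   a : nat -> R absolutely summable (a n = h(n)) and b = h(omega). *)
Definition Fnl : Type := ((nat -> R) * R)%type.

Definition fsub (h g : Fnl) : Fnl :=
  (fun n => fst h n - fst g n, snd h - snd g).

Definition in_l1 (h : Fnl) : Prop :=
  exists s, infinite_sum (fun n => Rabs (fst h n)) s.

Definition norm_le (h : Fnl) (d : R) : Prop :=
  exists s, infinite_sum (fun n => Rabs (fst h n)) s /\ s + Rabs (snd h) <= d.

Definition eval (h : Fnl) (xs : nat -> R) (xw : R) (v : R) : Prop :=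
  exists s, infinite_sum (fun n => fst h n * xs n) s /\ v = s + snd h * xw.

Definition slice (K : Fnl -> Prop) (xs : nat -> R) (xw t : R) : Fnl -> Prop :=
  fun h => K h /\ exists v, eval h xs xw v /\ v > t.

Definition diam_lt (S : Fnl -> Prop) (eps : R) : Prop :=
  exists d, d < eps /\ forall h g, S h -> S g -> norm_le (fsub h g) d.

(* d_eps K: K minus the union of all weak*-slices of K of diameter < eps
   (h belongs to the slice, so the slice is nonempty). *)
Definition dset (eps : R) (K : Fnl -> Prop) : Fnl -> Prop :=
  fun h => K h /\
    ~ (exists xs xw t, Un_cv xs xw /\ slice K xs xw t h /\
                       diam_lt (slice K xs xw t) eps).

Fixpoint dset_iter (eps : R) (n : nat) (K : Fnl -> Prop) : Fnl -> Prop :=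
  match n with
  | O => K
  | S m => dset eps (dset_iter eps m K)
  end.

Definition dset_omega (eps : R) (K : Fnl -> Prop) : Fnl -> Prop :=
  fun h => forall n, dset_iter eps n K h.

Definition Ball : Fnl -> Prop := fun h => in_l1 h /\ norm_le h 1.

Definition f_omega : Fnl := (fun _ => 0, 1).

From Stdlib Require Import Reals.
From Stdlib Require Import Lra Lia FunctionalExtensionality.
Open Scope R_scope.

(* For a block [k, k + 2^m) of integers let nu k m be the
   uniform probability measure on it.  Such measures lie in the unit ball and
   nu k (m+1) is the midpoint of its two halves nu k m and nu (k + 2^m) m,
   each at norm distance 1 from it.  Since a weak*-slice containing a
   midpoint contains one of the two endpoints, no slice of d^m(B) containing
   nu k (m+1) has diameter < 1/2; by induction on m, nu k m lies in d^m(B)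
   for every k.  Finally, a slice containing f_omega is given by a function
   x with x(omega) > t; by continuity x > t on a far-out block, so the slice
   also contains some nu N n of d^n(B), at distance 2 from f_omega.  Hence
   f_omega survives every finite derivation, i.e. lies in d^omega(B).
   The file first develops finite sums and block functions, then the general
   criterion [dset_intro] and the midpoint property of slices, and finally
   the two inductions. *)

Fixpoint fsum (f : nat -> R) (n : nat) : R :=
  match n with O => 0 | S n => fsum f n + f n end.

Lemma sum_f_R0_fsum f n : sum_f_R0 f n = fsum f (S n).
Proof. induction n as [|n IH]; simpl in *; [ring | rewrite IH; ring]. Qed.

Lemma fsum_shift f k L :
  fsum f (k + L) = fsum f k + fsum (fun j => f (k + j)%nat) L.
Proof.
  induction L as [|L IH]; simpl; [rewrite Nat.add_0_r; ring|].
  rewrite Nat.add_succ_r; simpl; rewrite IH; ring.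
Qed.

Lemma fsum_ext f g n :
  (forall i, (i < n)%nat -> f i = g i) -> fsum f n = fsum g n.
Proof.
  induction n as [|n IH]; intros H; simpl; [reflexivity|].
  rewrite IH by (intros; apply H; lia).
  rewrite (H n) by lia; reflexivity.
Qed.

Lemma fsum_const c L : fsum (fun _ => c) L = INR L * c.
Proof. induction L as [|L IH]; simpl fsum; [simpl; ring | rewrite IH, S_INR; ring]. Qed.

Lemma fsum_scal c f L : fsum (fun j => c * f j) L = c * fsum f L.
Proof. induction L as [|L IH]; simpl; [ring | rewrite IH; ring]. Qed.

Lemma fsum_gt f t L :
  (0 < L)%nat -> (forall j, f j > t) -> fsum f L > INR L * t.
Proof.
  intros HL H; induction L as [|L IH]; [lia|].
  simpl fsum; rewrite S_INR; specialize (H L).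
  destruct L as [|L]; [simpl; lra|].
  assert (fsum f (S L) > INR (S L) * t) by (apply IH; lia); lra.
Qed.

Lemma fsum_fin f N :
  (forall i, (N <= i)%nat -> f i = 0) -> infinite_sum f (fsum f N).
Proof.
  intros H eps Heps; exists N; intros n Hn.
  assert (Hstable : forall p, fsum f (N + p) = fsum f N).
  { induction p as [|p IH]; [now rewrite Nat.add_0_r|].
    rewrite Nat.add_succ_r; simpl; rewrite IH, H by lia; ring. }
  rewrite sum_f_R0_fsum; replace (S n) with (N + (S n - N))%nat by lia.
  rewrite Hstable; unfold Rdist; rewrite Rminus_diag, Rabs_R0; lra.
Qed.

Definition blk (k L : nat) (c : R) (i : nat) : R :=
  if (Nat.leb k i && Nat.ltb i (k + L))%bool then c else 0.

Lemma blk_in k L c i : (k <= i < k + L)%nat -> blk k L c i = c.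
Proof.
  intros H; unfold blk.
  destruct (Nat.leb_spec k i), (Nat.ltb_spec i (k + L)); simpl; auto; lia.
Qed.

Lemma blk_out k L c i : (i < k \/ k + L <= i)%nat -> blk k L c i = 0.
Proof.
  intros H; unfold blk.
  destruct (Nat.leb_spec k i), (Nat.ltb_spec i (k + L)); simpl; auto; lia.
Qed.

Lemma blk_pair k L c g :
  infinite_sum (fun i => blk k L c i * g i) (c * fsum (fun j => g (k + j)%nat) L).
Proof.
  replace (c * fsum (fun j => g (k + j)%nat) L)
    with (fsum (fun i => blk k L c i * g i) (k + L)).
  - apply fsum_fin; intros; rewrite blk_out by lia; ring.
  - rewrite fsum_shift, <- fsum_scal.
    rewrite (fsum_ext _ (fun _ => 0) k) by (intros; rewrite blk_out by lia; ring).
    rewrite fsum_const, Rmult_0_r, Rplus_0_l.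
    apply fsum_ext; intros; rewrite blk_in by lia; ring.
Qed.

Lemma blk_sum k L c : infinite_sum (blk k L c) (INR L * c).
Proof.
  pose proof (blk_pair k L c (fun _ => 1)) as H; cbv beta in H.
  rewrite fsum_const in H.
  replace (blk k L c) with (fun i => blk k L c i * 1)
    by (apply functional_extensionality; intros; ring).
  replace (INR L * c) with (c * (INR L * 1)) by ring; exact H.
Qed.

Lemma blk_halves_diff k L c i : 0 <= c ->
  Rabs (blk k L (2 * c) i - blk k (L + L) c i) = blk k (L + L) c i /\
  Rabs (blk (k + L) L (2 * c) i - blk k (L + L) c i) = blk k (L + L) c i.
Proof.
  intros Hc.
  destruct (Nat.lt_ge_cases i k); [rewrite !blk_out by lia|].
  { rewrite Rminus_0_r, Rabs_R0; auto. }
  destruct (Nat.lt_ge_cases i (k + L)).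
  { rewrite (blk_out (k + L)) by lia; rewrite !blk_in by lia.
    split; [rewrite Rabs_right | rewrite Rabs_left1]; lra. }
  destruct (Nat.lt_ge_cases i (k + (L + L))).
  { rewrite (blk_out k L) by lia; rewrite !blk_in by lia.
    split; [rewrite Rabs_left1 | rewrite Rabs_right]; lra. }
  rewrite !blk_out by lia; rewrite Rminus_0_r, Rabs_R0; auto.
Qed.

Lemma pow2_pos m : 0 < 2 ^ m.
Proof. apply pow_lt; lra. Qed.

Lemma pow2_nat_pos m : (0 < 2 ^ m)%nat.
Proof. induction m; simpl; lia. Qed.

Lemma INR_pow2 m : INR (2 ^ m)%nat = 2 ^ m.
Proof. rewrite pow_INR; reflexivity. Qed.

Lemma blk_pow2_sum k m : infinite_sum (blk k (2 ^ m)%nat (/ 2 ^ m)) 1.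
Proof.
  assert (Hmass : INR (2 ^ m)%nat * / 2 ^ m = 1)
    by (rewrite INR_pow2; field; apply Rgt_not_eq, pow2_pos).
  rewrite <- Hmass; apply blk_sum.
Qed.

Lemma norm_le_ge h s d :
  infinite_sum (fun n => Rabs (fst h n)) s -> norm_le h d -> s + Rabs (snd h) <= d.
Proof.
  intros Hs [s' [Hs' Hle]]; rewrite (uniqueness_sum _ _ _ Hs Hs'); exact Hle.
Qed.

Definition dist_ge (g h : Fnl) (r : R) : Prop :=
  forall d, norm_le (fsub g h) d -> r <= d.

Lemma dset_intro eps K h :
  K h ->
  (forall xs xw t, Un_cv xs xw -> slice K xs xw t h ->
     exists g, slice K xs xw t g /\ dist_ge g h eps) ->
  dset eps K h.
Proof.
  intros HK Hfar; split; [exact HK|].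
  intros [xs [xw [t [Hcv [Hh [d [Hd Hdiam]]]]]]].
  destruct (Hfar xs xw t Hcv Hh) as [g [Hg Hgh]].
  specialize (Hgh d (Hdiam g h Hg Hh)); lra.
Qed.

Lemma eval_unique h xs xw v1 v2 : eval h xs xw v1 -> eval h xs xw v2 -> v1 = v2.
Proof.
  intros [s1 [H1 E1]] [s2 [H2 E2]].
  rewrite (uniqueness_sum _ _ _ H1 H2) in E1; congruence.
Qed.

Lemma slice_midpoint K xs xw t h g1 g2 v1 v2 :
  K g1 -> K g2 -> eval g1 xs xw v1 -> eval g2 xs xw v2 ->
  eval h xs xw ((v1 + v2) / 2) -> slice K xs xw t h ->
  slice K xs xw t g1 \/ slice K xs xw t g2.
Proof.
  intros K1 K2 E1 E2 Eh [_ [v [Ev Hvt]]].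
  rewrite <- (eval_unique _ _ _ _ _ Eh Ev) in Hvt.
  destruct (Rlt_or_le t v1); [left | right]; split; auto;
    [exists v1 | exists v2]; split; auto; lra.
Qed.

Definition nu (k m : nat) : Fnl := (blk k (2 ^ m)%nat (/ 2 ^ m), 0).

Lemma nu_abs k m : (fun n => Rabs (fst (nu k m) n)) = blk k (2 ^ m)%nat (/ 2 ^ m).
Proof.
  apply functional_extensionality; intros i; simpl.
  pose proof (Rinv_0_lt_compat _ (pow2_pos m)).
  unfold blk; destruct (_ && _)%bool; rewrite Rabs_right; lra.
Qed.

Lemma nu_ball k m : Ball (nu k m).
Proof.
  pose proof (blk_pow2_sum k m) as Hs; rewrite <- nu_abs in Hs.
  split; [exists 1; exact Hs|].
  exists 1; split; [exact Hs | simpl; rewrite Rabs_R0; lra].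
Qed.

Lemma nu_eval k m (xs : nat -> R) (xw : R) :
  eval (nu k m) xs xw (/ 2 ^ m * fsum (fun j => xs (k + j)%nat) (2 ^ m)%nat).
Proof. eexists; split; [apply blk_pair | simpl; ring]. Qed.

Lemma nu_eval_midpoint k m (xs : nat -> R) :
  / 2 ^ S m * fsum (fun j => xs (k + j)%nat) (2 ^ S m)%nat =
  (/ 2 ^ m * fsum (fun j => xs (k + j)%nat) (2 ^ m)%nat +
   / 2 ^ m * fsum (fun j => xs (k + 2 ^ m + j)%nat) (2 ^ m)%nat) / 2.
Proof.
  replace (2 ^ S m)%nat with (2 ^ m + 2 ^ m)%nat by (simpl; lia).
  rewrite fsum_shift.
  rewrite (fsum_ext (fun j => xs (k + (2 ^ m + j))%nat)
                    (fun j => xs (k + 2 ^ m + j)%nat))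
    by (intros; rewrite Nat.add_assoc; reflexivity).
  simpl pow; field; apply Rgt_not_eq, pow2_pos.
Qed.

Lemma nu_halves_far k m :
  dist_ge (nu k m) (nu k (S m)) 1 /\ dist_ge (nu (k + 2 ^ m) m) (nu k (S m)) 1.
Proof.
  assert (Hsplit : forall g, snd g = 0 ->
    (forall i, Rabs (fst g i - blk k (2 ^ S m)%nat (/ 2 ^ S m) i)
               = blk k (2 ^ S m)%nat (/ 2 ^ S m) i) ->
    dist_ge g (nu k (S m)) 1).
  { intros g Hg Hdiff d Hd.
    apply (norm_le_ge _ 1) in Hd; [simpl in Hd; rewrite Hg, Rminus_0_r, Rabs_R0 in Hd; lra|].
    replace (fun n => Rabs (fst (fsub g (nu k (S m))) n))
      with (blk k (2 ^ S m)%nat (/ 2 ^ S m))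
      by (apply functional_extensionality; intros; symmetry; apply Hdiff).
    apply blk_pow2_sum. }
  assert (Hlen : (2 ^ S m = 2 ^ m + 2 ^ m)%nat) by (simpl; lia).
  assert (Hc : / 2 ^ m = 2 * / 2 ^ S m)
    by (simpl; field; apply Rgt_not_eq, pow2_pos).
  assert (Hc0 : 0 <= / 2 ^ S m) by (left; apply Rinv_0_lt_compat, pow2_pos).
  split; apply Hsplit; auto; intros i; simpl fst; rewrite Hlen, Hc;
    apply (blk_halves_diff k (2 ^ m)%nat _ i Hc0).
Qed.

Lemma nu_in_dset_iter n : forall m k, (n <= m)%nat -> dset_iter (1/2) n Ball (nu k m).
Proof.
  induction n as [|n IH]; intros m k Hm; [apply nu_ball|].
  destruct m as [|m]; [lia|]; simpl.
  apply dset_intro; [apply IH; lia|].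
  intros xs xw t _ Hslice.
  destruct (nu_halves_far k m) as [Far1 Far2].
  destruct (slice_midpoint _ xs xw t _ (nu k m) (nu (k + 2 ^ m) m) _ _
              (IH m k ltac:(lia)) (IH m (k + 2 ^ m)%nat ltac:(lia))
              (nu_eval k m xs xw) (nu_eval (k + 2 ^ m) m xs xw)
              ltac:(rewrite <- nu_eval_midpoint; apply nu_eval) Hslice)
    as [H1 | H2];
    [exists (nu k m) | exists (nu (k + 2 ^ m) m)]; split; auto;
    intros d Hd; [specialize (Far1 d Hd) | specialize (Far2 d Hd)]; lra.
Qed.

Lemma f_omega_abs : (fun n => Rabs (fst f_omega n)) = fun _ => 0.
Proof. apply functional_extensionality; intros; simpl; apply Rabs_R0. Qed.

Lemma f_omega_ball : Ball f_omega.
Proof.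
  assert (Hs : infinite_sum (fun n => Rabs (fst f_omega n)) 0).
  { rewrite f_omega_abs; apply (fsum_fin _ 0); auto. }
  split; [exists 0; exact Hs|].
  exists 0; split; [exact Hs | simpl; rewrite Rabs_R1; lra].
Qed.

Lemma f_omega_eval xs xw v : eval f_omega xs xw v -> v = xw.
Proof.
  intros [s [Hs E]].
  assert (s = 0) as ->.
  { apply (uniqueness_sum _ _ _ Hs), (fsum_fin _ 0); intros; simpl; ring. }
  simpl in E; lra.
Qed.

Lemma nu_far_from_f_omega k m : dist_ge (nu k m) f_omega 2.
Proof.
  intros d Hd; apply (norm_le_ge _ 1) in Hd.
  - simpl in Hd; replace (0 - 1) with (- (1)) in Hd by ring.
    rewrite Rabs_Ropp, Rabs_R1 in Hd; lra.
  - replace (fun n => Rabs (fst (fsub (nu k m) f_omega) n))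
      with (fun n => Rabs (fst (nu k m) n))
      by (apply functional_extensionality; intros; simpl; rewrite Rminus_0_r; reflexivity).
    rewrite nu_abs; apply blk_pow2_sum.
Qed.

Lemma block_average_gt xs t N m :
  (forall j, xs (N + j)%nat > t) ->
  / 2 ^ m * fsum (fun j => xs (N + j)%nat) (2 ^ m)%nat > t.
Proof.
  intros Hx.
  pose proof (fsum_gt _ t _ (pow2_nat_pos m) Hx) as Hsum.
  rewrite INR_pow2 in Hsum.
  apply Rmult_gt_compat_l with (r := / 2 ^ m) in Hsum;
    [|apply Rinv_0_lt_compat, pow2_pos].
  rewrite <- Rmult_assoc, Rinv_l in Hsum by apply Rgt_not_eq, pow2_pos; lra.
Qed.

(* Every weak*-slice of d^n(B) through f_omega contains some far block measure. *)
Lemma f_omega_in_dset_iter n : dset_iter (1/2) n Ball f_omega.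
Proof.
  induction n as [|n IH]; [apply f_omega_ball|]; simpl.
  apply dset_intro; [exact IH|].
  intros xs xw t Hcv [_ [v [Ev Hvt]]].
  rewrite (f_omega_eval _ _ _ Ev) in Hvt.
  destruct (Hcv (xw - t)) as [N HN]; [lra|].
  assert (Hfar : forall j, xs (N + j)%nat > t).
  { intros j; specialize (HN (N + j)%nat ltac:(lia)).
    unfold Rdist in HN; apply Rabs_def2 in HN; lra. }
  exists (nu N n); split.
  - split; [apply nu_in_dset_iter; lia|].
    eexists; split; [apply nu_eval | apply block_average_gt, Hfar].
  - intros d Hd; specialize (nu_far_from_f_omega N n d Hd); lra.
Qed.

Theorem mainTheorem8 : dset_omega (1/2) Ball f_omega.
Proof. intros n; apply f_omega_in_dset_iter. Qed.
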